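(* Let $(\mathcal{C},\wedge,S)$ be a braided monoidal category, $T\in\mathcal{C}$, and $s,t:T\to T$ endomorphisms. The following are equivalent: (1) $\beta_{T,T}=s\wedge t$; (2) $\beta_{T,T}=t\wedge s$; (3) $\beta_{T,T}=ts\wedge\mathrm{id}_T$; (4) $\beta_{T,T}=st\wedge\mathrm{id}_T$; (5) $\beta_{T,T}=\mathrm{id}_T\wedge ts$; (6) $\beta_{T,T}=\mathrm{id}_T\wedge st$.
   Context: $\beta_{T,T}:T\wedge T\to T\wedge T$ is the braiding isomorphism. *)

Set Implicit Arguments.
Unset Strict Implicit.

Record BraidedMonoidalCategory : Type := {
  Ob : Type;
  Hom : Ob -> Ob -> Type;
  idm : forall A : Ob, Hom A A;
  comp : forall A B C : Ob, Hom B C -> Hom A B -> Hom A C;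
  comp_id_l : forall A B (f : Hom A B), comp (idm B) f = f;
  comp_id_r : forall A B (f : Hom A B), comp f (idm A) = f;
  comp_assoc : forall A B C D (h : Hom C D) (g : Hom B C) (f : Hom A B),
      comp h (comp g f) = comp (comp h g) f;

  (* monoidal product (the functor "∧") and unit object S *)
  tens : Ob -> Ob -> Ob;
  tens_hom : forall A B C D, Hom A B -> Hom C D -> Hom (tens A C) (tens B D);
  tens_id : forall A B, tens_hom (idm A) (idm B) = idm (tens A B);
  tens_comp : forall A1 B1 C1 A2 B2 C2
      (g1 : Hom B1 C1) (f1 : Hom A1 B1) (g2 : Hom B2 C2) (f2 : Hom A2 B2),
      tens_hom (comp g1 f1) (comp g2 f2) = comp (tens_hom g1 g2) (tens_hom f1 f2);
  unit_ob : Ob;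

  assoc : forall A B C, Hom (tens (tens A B) C) (tens A (tens B C));
  assoc_inv : forall A B C, Hom (tens A (tens B C)) (tens (tens A B) C);
  assoc_inv_l : forall A B C, comp (assoc_inv A B C) (assoc A B C) = idm _;
  assoc_inv_r : forall A B C, comp (assoc A B C) (assoc_inv A B C) = idm _;
  assoc_nat : forall A A' B B' C C' (f : Hom A A') (g : Hom B B') (h : Hom C C'),
      comp (assoc A' B' C') (tens_hom (tens_hom f g) h)
      = comp (tens_hom f (tens_hom g h)) (assoc A B C);

  lunit : forall A, Hom (tens unit_ob A) A;
  lunit_inv : forall A, Hom A (tens unit_ob A);
  lunit_inv_l : forall A, comp (lunit_inv A) (lunit A) = idm _;
  lunit_inv_r : forall A, comp (lunit A) (lunit_inv A) = idm _;
  lunit_nat : forall A B (f : Hom A B),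
      comp (lunit B) (tens_hom (idm unit_ob) f) = comp f (lunit A);
  runit : forall A, Hom (tens A unit_ob) A;
  runit_inv : forall A, Hom A (tens A unit_ob);
  runit_inv_l : forall A, comp (runit_inv A) (runit A) = idm _;
  runit_inv_r : forall A, comp (runit A) (runit_inv A) = idm _;
  runit_nat : forall A B (f : Hom A B),
      comp (runit B) (tens_hom f (idm unit_ob)) = comp f (runit A);

  pentagon : forall A B C D,
      comp (tens_hom (idm A) (assoc B C D))
           (comp (assoc A (tens B C) D) (tens_hom (assoc A B C) (idm D)))
      = comp (assoc A B (tens C D)) (assoc (tens A B) C D);
  triangle : forall A B,
      comp (tens_hom (idm A) (lunit B)) (assoc A unit_ob B)
      = tens_hom (runit A) (idm B);

  braid : forall A B, Hom (tens A B) (tens B A);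
  braid_inv : forall A B, Hom (tens B A) (tens A B);
  braid_inv_l : forall A B, comp (braid_inv A B) (braid A B) = idm _;
  braid_inv_r : forall A B, comp (braid A B) (braid_inv A B) = idm _;
  braid_nat : forall A A' B B' (f : Hom A A') (g : Hom B B'),
      comp (braid A' B') (tens_hom f g) = comp (tens_hom g f) (braid A B);
  hexagon1 : forall A B C,
      comp (assoc B C A) (comp (braid A (tens B C)) (assoc A B C))
      = comp (tens_hom (idm B) (braid A C))
             (comp (assoc B A C) (tens_hom (braid A B) (idm C)));
  hexagon2 : forall A B C,
      comp (assoc_inv C A B) (comp (braid (tens A B) C) (assoc_inv A B C))
      = comp (tens_hom (braid A C) (idm B))
             (comp (assoc_inv A C B) (tens_hom (idm A) (braid B C)))
}.

Arguments idm {b} A.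
Arguments comp {b A B C} _ _.
Arguments tens {b} _ _.
Arguments tens_hom {b A B C D} _ _.
Arguments braid {b} A B.
Arguments Hom {b} _ _.

From Stdlib Require Import Setoid.

Set Implicit Arguments.
Unset Strict Implicit.

(* If β = a ⊗ b, then a ⊗ 1 commutes with β by the interchange law, so
   naturality of β and its invertibility force a ⊗ 1 = 1 ⊗ a (likewise for b);
   with the interchange law every factor can then be moved to either side,
   which gives (1) ⟹ (2)–(6).  Conversely, if β = a ⊗ 1, naturality yields
   β ∘ (f ⊗ g) = g a f ⊗ 1 and a f ⊗ 1 = f a ⊗ 1; for a = t s this gives
   β ∘ (s ⊗ t) = β ∘ β, and cancelling β gives β = s ⊗ t. *)

Section Generic.
Variable C : BraidedMonoidalCategory.

Lemma tens_hom_factor_l (A A' B B' : Ob C) (f : Hom A A') (g : Hom B B') :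
  tens_hom f g = comp (tens_hom f (idm B')) (tens_hom (idm A) g).
Proof. rewrite <- tens_comp, comp_id_l, comp_id_r. reflexivity. Qed.

Lemma tens_hom_factor_r (A A' B B' : Ob C) (f : Hom A A') (g : Hom B B') :
  tens_hom f g = comp (tens_hom (idm A') g) (tens_hom f (idm B)).
Proof. rewrite <- tens_comp, comp_id_l, comp_id_r. reflexivity. Qed.

Lemma braid_monic (A B X : Ob C) (x y : Hom X (tens A B)) :
  comp (braid A B) x = comp (braid A B) y -> x = y.
Proof.
  intro E.
  rewrite <- (comp_id_l x), <- (comp_id_l y), <- (braid_inv_l A B),
    <- !comp_assoc, E.
  reflexivity.
Qed.

Lemma braid_epic (A B X : Ob C) (x y : Hom (tens B A) X) :
  comp x (braid A B) = comp y (braid A B) -> x = y.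
Proof.
  intro E.
  rewrite <- (comp_id_r x), <- (comp_id_r y), <- (braid_inv_r A B),
    !comp_assoc, E.
  reflexivity.
Qed.

End Generic.

Section BraidSelf.
Variable C : BraidedMonoidalCategory.
Variable T : Ob C.

Lemma braid_tens_balanced_l (a b : Hom T T) :
  braid T T = tens_hom a b -> tens_hom a (idm T) = tens_hom (idm T) a.
Proof.
  intro Hab. apply braid_epic.
  rewrite <- (braid_nat a (idm T)), Hab, <- !tens_comp, !comp_id_l, !comp_id_r.
  reflexivity.
Qed.

Lemma braid_tens_balanced_r (a b : Hom T T) :
  braid T T = tens_hom a b -> tens_hom b (idm T) = tens_hom (idm T) b.
Proof.
  intro Hab. apply braid_epic.
  rewrite <- (braid_nat (idm T) b), Hab, <- !tens_comp, !comp_id_l, !comp_id_r.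
  reflexivity.
Qed.

Section BraidTens.
Variables s t : Hom T T.
Hypothesis Hst : braid T T = tens_hom s t.

Lemma braid_tens_swap : braid T T = tens_hom t s.
Proof.
  rewrite Hst, tens_hom_factor_r, (tens_hom_factor_l t s),
    (braid_tens_balanced_l Hst), (braid_tens_balanced_r Hst).
  reflexivity.
Qed.

Lemma braid_tens_comp_l : braid T T = tens_hom (comp t s) (idm T).
Proof.
  rewrite Hst, tens_hom_factor_r, <- (braid_tens_balanced_r Hst), <- tens_comp,
    comp_id_l.
  reflexivity.
Qed.

End BraidTens.

Lemma braid_tens_swap_iff (s t : Hom T T) :
  braid T T = tens_hom s t <-> braid T T = tens_hom t s.
Proof. split; apply braid_tens_swap. Qed.

Lemma braid_tens_id_l_iff (x : Hom T T) :
  braid T T = tens_hom x (idm T) <-> braid T T = tens_hom (idm T) x.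
Proof.
  split; intro Hx.
  - rewrite Hx. exact (braid_tens_balanced_l Hx).
  - rewrite Hx. symmetry. exact (braid_tens_balanced_r Hx).
Qed.

Section BraidTensIdl.
Variable a : Hom T T.
Hypothesis Ha : braid T T = tens_hom a (idm T).

Lemma tens_hom_comp_l_id (f : Hom T T) :
  tens_hom (comp a f) (idm T) = tens_hom a f.
Proof.
  transitivity (comp (braid T T) (tens_hom f (idm T))).
  - rewrite Ha, <- tens_comp, comp_id_l. reflexivity.
  - rewrite braid_nat, Ha, <- tens_comp, comp_id_l, comp_id_r. reflexivity.
Qed.

Lemma tens_hom_id_comp_r (f : Hom T T) :
  tens_hom a f = tens_hom (comp f a) (idm T).
Proof.
  transitivity (comp (braid T T) (tens_hom (idm T) f)).
  - rewrite Ha, <- tens_comp, comp_id_l, comp_id_r. reflexivity.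
  - rewrite braid_nat, Ha, <- tens_comp, comp_id_l. reflexivity.
Qed.

Lemma tens_hom_comp_comm (f : Hom T T) :
  tens_hom (comp a f) (idm T) = tens_hom (comp f a) (idm T).
Proof. rewrite tens_hom_comp_l_id. apply tens_hom_id_comp_r. Qed.

Lemma braid_comp_tens (f g : Hom T T) :
  comp (braid T T) (tens_hom f g) = tens_hom (comp g (comp a f)) (idm T).
Proof.
  transitivity (comp (tens_hom a g) (tens_hom f (idm T))).
  - rewrite Ha, <- !tens_comp, comp_id_l, comp_id_r. reflexivity.
  - rewrite tens_hom_id_comp_r, <- tens_comp, comp_id_l, comp_assoc.
    reflexivity.
Qed.

End BraidTensIdl.

Lemma braid_tens_of_comp_l (s t : Hom T T) :
  braid T T = tens_hom (comp t s) (idm T) -> braid T T = tens_hom s t.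
Proof.
  intro Hts. symmetry. apply braid_monic.
  rewrite (braid_comp_tens Hts).
  transitivity (comp (braid T T) (tens_hom (comp t s) (idm T)));
    [| rewrite <- Hts; reflexivity].
  rewrite (braid_comp_tens Hts), comp_id_l.
  transitivity (comp (tens_hom t (idm T)) (tens_hom (comp (comp t s) s) (idm T))).
  - rewrite <- tens_comp, comp_id_l, comp_assoc. reflexivity.
  - rewrite (tens_hom_comp_comm Hts), <- tens_comp, comp_id_l, !comp_assoc.
    reflexivity.
Qed.

Lemma braid_tens_comp_l_iff (s t : Hom T T) :
  braid T T = tens_hom s t <-> braid T T = tens_hom (comp t s) (idm T).
Proof. split; [apply braid_tens_comp_l | apply braid_tens_of_comp_l]. Qed.

End BraidSelf.

Theorem proposition3p1 (Cat : BraidedMonoidalCategory) (T : Ob Cat)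
    (s t : @Hom Cat T T) :
  (braid T T = tens_hom s t <-> braid T T = tens_hom t s)
  /\ (braid T T = tens_hom s t <-> braid T T = tens_hom (comp t s) (idm T))
  /\ (braid T T = tens_hom s t <-> braid T T = tens_hom (comp s t) (idm T))
  /\ (braid T T = tens_hom s t <-> braid T T = tens_hom (idm T) (comp t s))
  /\ (braid T T = tens_hom s t <-> braid T T = tens_hom (idm T) (comp s t)).
Proof.
  rewrite <- !braid_tens_id_l_iff, <- !braid_tens_comp_l_iff.
  pose proof (braid_tens_swap_iff s t). tauto.
Qed.
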